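(* Let $0<q<1$, $\tau\in\mathbb{R}$ and $\phi\in[0,2\pi)$. Let $\{e_n\}_{n\in\mathbb{Z}_+}$ be the standard orthonormal basis of $\ell^2(\mathbb{Z}_+)$ and let $D$ be the bounded self-adjoint operator on $\ell^2(\mathbb{Z}_+)$ with $De_n=q^{2n}e_n$. For $\lambda\in\{-q^{2k}\mid k\in\mathbb{Z}_+\}\cup\{q^{2\tau+2k}\mid k\in\mathbb{Z}_+\}$ let $$v_\lambda^\phi=\sum_{n=0}^\infty i^n e^{in\phi}p_n(\lambda)e_n,\qquad p_n(\lambda)=\frac{q^{-n\tau}q^{\frac12 n(n-1)}}{\sqrt{(q^2;q^2)_n}}\;{}_2\varphi_1\!\left(q^{-2n},\,q^{2\tau}/\lambda;\,0;\,q^2,\,-q^2\lambda\right).$$ Then for all $k,l\in\mathbb{Z}_+$ with $k\geq l$, $$\langle Dv^\phi_{-q^{2k}},v^\phi_{-q^{2l}}\rangle=(-q^{2\tau+2};q^2)_\infty\,(q^2;q^2)_k\,(-q^{2-2\tau};q^2)_l,$$ $$\langle Dv^\phi_{q^{2\tau+2k}},v^\phi_{q^{2\tau+2l}}\rangle=(-q^{2-2\tau};q^2)_\infty\,(q^2;q^2)_k\,(-q^{2+2\tau};q^2)_l,$$ and for all $k,l\in\mathbb{Z}_+$, $$\langle Dv^\phi_{-q^{2k}},v^\phi_{q^{2\tau+2l}}\rangle=(q^2;q^2)_\infty\,(-q^{2-2\tau};q^2)_k\,(-q^{2+2\tau};q^2)_l.$$ (The remaining matrix coefficients follow from self-adjointness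 of $D$.)
   Context: For $k\in\mathbb{Z}_+\cup\{\infty\}$ the $q$-shifted factorial is $(a;q)_k=\prod_{i=0}^{k-1}(1-aq^i)$, and $(a_1,\dots,a_r;q)_k=\prod_{i}(a_i;q)_k$. The basic hypergeometric series is ${}_2\varphi_1(a,b;c;p,z)=\sum_{j\ge0}\frac{(a;p)_j(b;p)_j}{(p;p)_j(c;p)_j}z^j$ (here terminating since $a=q^{-2n}$, $p=q^2$). The vectors $v_\lambda^\phi$ lie in $\ell^2(\mathbb{Z}_+)$ (they are the eigenvectors forming an orthogonal basis). $\langle\cdot,\cdot\rangle$ is the inner product of $\ell^2(\mathbb{Z}_+)$. *)

From Stdlib Require Import Reals.
From Coquelicot Require Import Coquelicot.
Open Scope R_scope.

Fixpoint qpoch (a q : R) (k : nat) : R :=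
  match k with
  | O => 1
  | S k' => qpoch a q k' * (1 - a * q ^ k')
  end.

Definition qpoch_inf (a q : R) : R := real (Lim_seq (fun k => qpoch a q k)).

Definition phi21 (a b c p z : R) : R :=
  Series (fun j => qpoch a p j * qpoch b p j / (qpoch p p j * qpoch c p j) * z ^ j).

Definition pn (q tau lam : R) (n : nat) : R :=
  Rpower q (- INR n * tau) * Rpower q (INR n * (INR n - 1) / 2)
  / sqrt (qpoch (q ^ 2) (q ^ 2) n)
  * phi21 (/ q ^ (2 * n)) (Rpower q (2 * tau) / lam) 0 (q ^ 2) (- q ^ 2 * lam).

(* coordinates of v_lambda^phi in the standard basis e_n of l^2(Z_+):
   i^n e^{i n phi} p_n(lambda) *)
Definition vvec (q tau phi lam : R) (n : nat) : C :=
  (Cpow Ci n * (cos (INR n * phi), sin (INR n * phi)) * RtoC (pn q tau lam n))%C.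

Definition Dop (q : R) (v : nat -> C) (n : nat) : C := (RtoC (q ^ (2 * n)) * v n)%C.

Definition inner_is (x y : nat -> C) (l : C) : Prop :=
  is_series (fun n => (x n * Cconj (y n))%C) l.

From Stdlib Require Import Reals Lra Lia.
From Coquelicot Require Import Coquelicot.
Open Scope R_scope.

(* Put Q = q^2 and t = q^(2 tau).  The phases of v cancel in <D v_lam, v_mu>, which is therefore
   sum_n w_n phi_n(lam) phi_n(mu) with w_n = (Q/t)^n Q^(n(n-1)/2) / (Q;Q)_n and
   phi_n(lam) = 2phi1(Q^-n, t/lam; 0; Q, -Q lam).  The contiguous relation
   phi(lam Q) = (1 - lam L) phi(lam), for the lowering operator (L f)_n = (1 - Q^n) Q^(1-n) f_(n-1),
   gives phi(a Q^k) = (a L; Q)_k phi(a), and phi(-1) = (-t)^n (q-Chu-Vandermonde) and phi(t) = 1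
   are geometric.  For the weight w, L is adjoint to Q/t times the forward shift, so every
   pairing satisfies a recursion in the degrees k, l whose initial values are pairings of
   geometric sequences, i.e. Euler's series sum_n Q^(n(n-1)/2) x^n / (Q;Q)_n = (-x;Q)_oo. *)

Definition shift_right (a : nat -> R) (n : nat) : R :=
  match n with O => 0 | S m => a m end.

Lemma is_series_shift_right (a : nat -> R) (l : R) :
  is_series a l -> is_series (shift_right a) l.
Proof.
  intros Ha. apply is_series_decr_1.
  match goal with |- is_series _ ?v => replace v with l by (unfold plus, opp; simpl; ring) end.
  exact Ha.
Qed.

Lemma is_series_Rext (a b : nat -> R) (l : R) :
  (forall n, a n = b n) -> is_series a l -> is_series b l.
Proof. exact (is_series_ext a b l). Qed.

Lemma is_series_Rscal (c : R) (a : nat -> R) (l : R) :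
  is_series a l -> is_series (fun n => c * a n) (c * l).
Proof. exact (is_series_scal_l c a l). Qed.

Lemma is_series_Rlin (c d : R) (a b f : nat -> R) (la lb l : R) :
  is_series a la -> is_series b lb ->
  (forall n, f n = c * a n + d * b n) -> l = c * la + d * lb -> is_series f l.
Proof.
  intros Ha Hb Hf ->. apply (is_series_Rext (fun n => c * a n + d * b n)); [congruence|].
  apply (is_series_plus (fun n => c * a n) (fun n => d * b n) (c * la) (d * lb)).
  - exact (is_series_Rscal c a la Ha).
  - exact (is_series_Rscal d b lb Hb).
Qed.

Lemma is_series_finite_support (f : nat -> R) (n : nat) :
  (forall j, (n < j)%nat -> f j = 0) -> is_series f (sum_n f n).
Proof.
  intros Hf. apply (filterlim_ext_loc (fun _ => sum_n f n)); [|apply filterlim_const].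
  exists n. intros N HN. induction HN as [|N HN IH]; [reflexivity|].
  rewrite sum_Sn, <- IH, Hf by lia. unfold plus; simpl. symmetry; apply Rplus_0_r.
Qed.

Lemma is_series_telescope (h : nat -> R) (n : nat) :
  (forall j, (n < j)%nat -> h j = 0) ->
  is_series (fun j => h j - shift_right h j) 0.
Proof.
  intros Hh. pose proof (is_series_finite_support h n Hh) as Hs.
  apply (is_series_Rlin 1 (-1) _ _ _ _ _ _ Hs (is_series_shift_right _ _ Hs)).
  - intros j. ring.
  - ring.
Qed.

Section Euler.

Variable Q : R.
Hypothesis HQ : 0 < Q < 1.

Lemma pow_S_lt_1 (m : nat) : Q ^ S m < 1.
Proof. apply (pow_lt_1_compat Q (S m)); [lra | lia]. Qed.

Fixpoint qexp_coef (n : nat) : R :=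
  match n with O => 1 | S m => qexp_coef m * Q ^ m / (1 - Q ^ S m) end.

Lemma qexp_coef_pos (n : nat) : 0 < qexp_coef n.
Proof.
  induction n as [|n IH]; simpl; [lra|].
  pose proof (pow_S_lt_1 n) as H; simpl in H.
  apply Rdiv_lt_0_compat; [|lra].
  apply Rmult_lt_0_compat; [exact IH | apply pow_lt; lra].
Qed.

Lemma CV_radius_qexp_coef : CV_radius qexp_coef = p_infty.
Proof.
  apply CV_radius_infinite_DAlembert.
  - intros n. pose proof (qexp_coef_pos n). lra.
  - apply is_lim_seq_ext with (u := fun n => Q ^ n / (1 - Q * Q ^ n)).
    { intros n. simpl qexp_coef. pose proof (qexp_coef_pos n).
      pose proof (pow_S_lt_1 n) as H1; simpl in H1.
      pose proof (pow_lt Q n ltac:(lra)).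
      rewrite Rabs_pos_eq.
      - field. lra.
      - apply Rlt_le, Rdiv_lt_0_compat; [apply Rdiv_lt_0_compat|]; nra. }
    assert (Hgeom : is_lim_seq (fun n => Q ^ n) 0)
      by (apply is_lim_seq_geom; rewrite Rabs_pos_eq; lra).
    replace (Finite 0) with (Finite (0 / (1 - Q * 0))) by (f_equal; field).
    apply is_lim_seq_div'; [exact Hgeom | | lra].
    apply is_lim_seq_minus'; [apply is_lim_seq_const|].
    apply is_lim_seq_mult'; [apply is_lim_seq_const | exact Hgeom].
Qed.

Definition qexp (x : R) : R := PSeries qexp_coef x.

Lemma is_series_qexp (x : R) : is_series (fun n => qexp_coef n * x ^ n) (qexp x).
Proof.
  assert (Hx : ex_pseries qexp_coef x).
  { apply CV_radius_inside. rewrite CV_radius_qexp_coef. exact I. }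
  apply (is_series_ext (fun n => scal (pow_n x n) (qexp_coef n))).
  - intros n. rewrite pow_n_pow. unfold scal; simpl. unfold mult; simpl. ring.
  - apply PSeries_correct. exact Hx.
Qed.

Lemma qexp_mul_Q (x : R) : qexp x = (1 + x) * qexp (Q * x).
Proof.
  set (d := fun n => qexp_coef n * x ^ n - qexp_coef n * (Q * x) ^ n).
  assert (Hdiff : is_series d (qexp x - qexp (Q * x))).
  { apply (is_series_Rlin 1 (-1) _ _ _ _ _ _ (is_series_qexp x) (is_series_qexp (Q * x)));
      intros; unfold d; ring. }
  assert (Hshift : is_series d (x * qexp (Q * x))).
  { apply (is_series_Rext (shift_right (fun n => x * (qexp_coef n * (Q * x) ^ n)))).
    - intros [|n]; unfold d, shift_right; simpl qexp_coef; [simpl; ring|].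
      rewrite !Rpow_mult_distr. pose proof (pow_S_lt_1 n) as H; simpl in H |- *.
      field. lra.
    - apply is_series_shift_right. apply is_series_Rscal, is_series_qexp. }
  pose proof (is_series_unique _ _ Hdiff) as E1.
  rewrite (is_series_unique _ _ Hshift) in E1. lra.
Qed.

Lemma qexp_pow_mul (x : R) (N : nat) : qexp x = qpoch (- x) Q N * qexp (Q ^ N * x).
Proof.
  induction N as [|N IH]; simpl; [rewrite !Rmult_1_l; reflexivity|].
  rewrite IH, (qexp_mul_Q (Q ^ N * x)).
  replace (Q * (Q ^ N * x)) with (Q * Q ^ N * x) by ring. ring.
Qed.

Lemma is_lim_seq_qpoch (x : R) : is_lim_seq (fun N => qpoch (- x) Q N) (qexp x).
Proof.
  assert (Htail : is_lim_seq (fun N => qexp (Q ^ N * x)) 1).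
  { replace 1 with (qexp 0) by (unfold qexp; rewrite PSeries_0; reflexivity).
    apply is_lim_seq_continuous.
    - apply PSeries_continuity. rewrite CV_radius_qexp_coef. exact I.
    - replace (Finite 0) with (Finite (0 * x)) by (f_equal; ring).
      apply is_lim_seq_mult'; [|apply is_lim_seq_const].
      apply is_lim_seq_geom. rewrite Rabs_pos_eq; lra. }
  apply is_lim_seq_ext_loc with (u := fun N => qexp x / qexp (Q ^ N * x)).
  - apply is_lim_seq_spec in Htail.
    destruct (Htail (mkposreal (1/2) ltac:(lra))) as [N0 HN0].
    exists N0. intros N HN. specialize (HN0 N HN). simpl in HN0.
    apply Rabs_lt_between' in HN0.
    rewrite (qexp_pow_mul x N) at 1. field. lra.
  - replace (Finite (qexp x)) with (Finite (qexp x / 1)) by (f_equal; field).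
    apply is_lim_seq_div'; [apply is_lim_seq_const | exact Htail | lra].
Qed.

Lemma qpoch_inf_qexp (x : R) : qpoch_inf (- x) Q = qexp x.
Proof. unfold qpoch_inf. rewrite (is_lim_seq_unique _ _ (is_lim_seq_qpoch x)). reflexivity. Qed.

Lemma is_series_euler (x : R) :
  is_series (fun n => qexp_coef n * x ^ n) (qpoch_inf (- x) Q).
Proof. rewrite qpoch_inf_qexp. apply is_series_qexp. Qed.

Lemma qpoch_inf_div_Q (c : R) : qpoch_inf (c / Q) Q = (1 - c / Q) * qpoch_inf c Q.
Proof.
  replace (c / Q) with (- - (c / Q)) by ring. replace c with (- - c) at 3 by ring.
  rewrite !qpoch_inf_qexp, qexp_mul_Q. replace (Q * - (c / Q)) with (- c) by (field; lra).
  ring.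
Qed.

Lemma qpoch_inf_inv_pow (m : nat) : qpoch_inf (/ Q ^ m) Q = 0.
Proof.
  induction m as [|m IH].
  - replace (/ Q ^ 0) with (Q / Q) by (simpl; field; lra).
    rewrite qpoch_inf_div_Q. replace (Q / Q) with 1 by (field; lra). ring.
  - replace (/ Q ^ S m) with (/ Q ^ m / Q) by (simpl; field; split; [apply pow_nonzero|]; lra).
    rewrite qpoch_inf_div_Q, IH. ring.
Qed.

End Euler.

Section Lowering.

Variable Q : R.
Hypothesis HQ0 : Q <> 0.

Definition lower (f : nat -> R) (n : nat) : R :=
  match n with O => 0 | S m => (1 - Q ^ S m) / Q ^ m * f m end.

(* [lpoch a b k] is [(a L; Q)_k = (1 - a L) (1 - a Q L) ... (1 - a Q^(k-1) L)], with [L = lower],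
   applied to the geometric sequence [n |-> (-b)^n]. *)
Fixpoint lpoch (a b : R) (k : nat) : nat -> R :=
  match k with
  | O => fun n => (- b) ^ n
  | S k' => fun n => lpoch a b k' n - a * Q ^ k' * lower (lpoch a b k') n
  end.

Lemma lower_ext (f g : nat -> R) (n : nat) :
  (forall j, f j = g j) -> lower f n = lower g n.
Proof. intros H; destruct n; simpl; [reflexivity | rewrite H; reflexivity]. Qed.

Lemma lower_lin (c d : R) (f g : nat -> R) (n : nat) :
  lower (fun j => c * f j + d * g j) n = c * lower f n + d * lower g n.
Proof. destruct n; simpl; ring. Qed.

Lemma lower_S (f : nat -> R) (n : nat) :
  lower f (S n) = / Q * lower (fun j => f (S j)) n + (1 - Q) * f n.
Proof.
  destruct n as [|m]; simpl; [field; exact HQ0|].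
  assert (Q ^ m <> 0) by (apply pow_nonzero; exact HQ0).
  field. split; assumption.
Qed.

Lemma lpoch_div_Q (a b : R) (k n : nat) :
  lpoch a (b / Q) k n = lpoch a b k n - b / Q * lower (lpoch a b k) n.
Proof.
  revert n; induction k as [|k IH]; intros n.
  - destruct n as [|m]; simpl; [ring|].
    assert (Q ^ m <> 0) by (apply pow_nonzero; exact HQ0).
    replace ((- b) ^ m) with ((- (b / Q)) ^ m * Q ^ m)
      by (rewrite <- Rpow_mult_distr; f_equal; field; exact HQ0).
    field. split; assumption.
  - simpl lpoch. rewrite IH.
    rewrite (lower_ext (lpoch a (b / Q) k)
               (fun j => 1 * lpoch a b k j + - (b / Q) * lower (lpoch a b k) j))
      by (intros j; rewrite IH; ring).
    rewrite (lower_ext (fun j => lpoch a b k j - a * Q ^ k * lower (lpoch a b k) j)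
               (fun j => 1 * lpoch a b k j + - (a * Q ^ k) * lower (lpoch a b k) j))
      by (intros j; ring).
    rewrite !lower_lin. ring.
Qed.

Lemma lpoch_S_n (a b : R) (k n : nat) :
  lpoch a b k (S n) = - b * lpoch a b k n - a * (1 - Q ^ k) * lpoch a (b / Q) (pred k) n.
Proof.
  revert n; induction k as [|k IH]; intros n; [simpl; ring|].
  cbn [lpoch pred]. rewrite lower_S, IH.
  rewrite (lower_ext (fun j => lpoch a b k (S j))
             (fun j => - b * lpoch a b k j + - a * (1 - Q ^ k) * lpoch a (b / Q) (pred k) j))
    by (intros j; rewrite IH; ring).
  rewrite lower_lin.
  pose proof (lpoch_div_Q a b k n) as Hdiv.
  destruct k as [|k].
  - simpl in Hdiv |- *. rewrite Hdiv. field. exact HQ0.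
  - assert (Hdef : lpoch a (b / Q) (S k) n
                   = lpoch a (b / Q) k n - a * Q ^ k * lower (lpoch a (b / Q) k) n)
      by reflexivity.
    simpl pred.
    (* split [1 - Q^(k+2)] as [(1 - Q^(k+1)) + Q^(k+1) (1 - Q)]; expand the first part by the
       definition of [lpoch], the second by [lpoch_div_Q] *)
    transitivity (- b * (lpoch a b (S k) n - a * Q ^ S k * lower (lpoch a b (S k)) n)
      - a * (1 - Q ^ S k) * (lpoch a (b / Q) k n - a * Q ^ k * lower (lpoch a (b / Q) k) n)
      - a * Q ^ S k * (1 - Q) * (lpoch a b (S k) n - b / Q * lower (lpoch a b (S k)) n)).
    + simpl pow. field. exact HQ0.
    + rewrite <- Hdef, <- Hdiv. simpl pow. ring.
Qed.

End Lowering.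

Section TerminatingSeries.

Variable Q : R.
Hypothesis HQ : 0 < Q < 1.

Lemma qpoch_0_l (j : nat) : qpoch 0 Q j = 1.
Proof. induction j as [|j IH]; simpl; [reflexivity | rewrite IH; ring]. Qed.

Lemma qpoch_S_l (x : R) (j : nat) : qpoch x Q (S j) = (1 - x) * qpoch (x * Q) Q j.
Proof.
  induction j as [|j IH]; [simpl; ring|].
  change (qpoch x Q (S (S j))) with (qpoch x Q (S j) * (1 - x * Q ^ S j)).
  rewrite IH. simpl. ring.
Qed.

Lemma qpoch_inv_pow_gt (n j : nat) : (n < j)%nat -> qpoch (/ Q ^ n) Q j = 0.
Proof.
  intros Hj. induction j as [|j IH]; [lia|]. simpl.
  destruct (Nat.eq_dec j n) as [->|Hne].
  - assert (Q ^ n <> 0) by (apply pow_nonzero; lra).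
    rewrite Rinv_l by assumption. ring.
  - rewrite IH by lia. ring.
Qed.

Lemma qpoch_Q_pos (j : nat) : 0 < qpoch Q Q j.
Proof.
  induction j as [|j IH]; simpl; [lra|].
  pose proof (pow_S_lt_1 Q HQ j) as H; simpl in H.
  apply Rmult_lt_0_compat; [exact IH | lra].
Qed.

Definition chu_term (n : nat) (b : R) (j : nat) : R :=
  qpoch (/ Q ^ n) Q j * qpoch b Q j / qpoch Q Q j * Q ^ j.

Lemma chu_term_S (n : nat) (b : R) (i : nat) :
  chu_term (S n) b (S i) = chu_term n b (S i) - / Q ^ n * (1 - b) * chu_term n (b * Q) i.
Proof.
  assert (Hn : Q ^ n <> 0) by (apply pow_nonzero; lra).
  pose proof (qpoch_Q_pos i). pose proof (pow_S_lt_1 Q HQ i) as Hi; simpl in Hi.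
  unfold chu_term.
  replace (/ Q ^ S n) with (/ Q ^ n / Q) by (simpl; field; lra).
  rewrite (qpoch_S_l (/ Q ^ n / Q)), (qpoch_S_l b).
  replace (/ Q ^ n / Q * Q) with (/ Q ^ n) by (field; lra).
  change (qpoch (/ Q ^ n) Q (S i)) with (qpoch (/ Q ^ n) Q i * (1 - / Q ^ n * Q ^ i)).
  change (qpoch Q Q (S i)) with (qpoch Q Q i * (1 - Q * Q ^ i)).
  simpl pow. field. lra.
Qed.

Lemma is_series_chu_vandermonde (n : nat) (b : R) : is_series (chu_term n b) (b ^ n).
Proof.
  revert b; induction n as [|n IH]; intros b.
  - replace (b ^ 0) with (sum_n (chu_term 0 b) 0)
      by (rewrite sum_O; unfold chu_term; simpl; field).
    apply is_series_finite_support. intros j Hj.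
    unfold chu_term. rewrite qpoch_inv_pow_gt by exact Hj. unfold Rdiv. ring.
  - assert (Hn : Q ^ n <> 0) by (apply pow_nonzero; lra).
    apply (is_series_Rlin 1 (- (/ Q ^ n * (1 - b))) _ _ _ _ _ _
             (IH b) (is_series_shift_right _ _ (IH (b * Q)))).
    + intros [|i]; [unfold chu_term; simpl; ring|].
      rewrite chu_term_S. simpl. ring.
    + rewrite Rpow_mult_distr. simpl. field. exact Hn.
Qed.

Variable t : R.

Fixpoint newton_basis (lam : R) (j : nat) : R :=
  match j with O => 1 | S i => newton_basis lam i * (lam - t * Q ^ i) end.

Definition newton_coef (n j : nat) : R := qpoch (/ Q ^ n) Q j * (- Q) ^ j / qpoch Q Q j.

Definition phin (lam : R) (n : nat) : R := phi21 (/ Q ^ n) (t / lam) 0 Q (- Q * lam).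

Lemma qpoch_div_mul_pow (lam : R) (j : nat) : lam <> 0 ->
  qpoch (t / lam) Q j * (- Q * lam) ^ j = (- Q) ^ j * newton_basis lam j.
Proof.
  intros Hl. induction j as [|j IH]; simpl; [ring|].
  transitivity (qpoch (t / lam) Q j * (- Q * lam) ^ j * ((1 - t / lam * Q ^ j) * (- Q * lam)));
    [ring|].
  rewrite IH. field. exact Hl.
Qed.

Lemma newton_coef_gt (n j : nat) : (n < j)%nat -> newton_coef n j = 0.
Proof. intros Hj. unfold newton_coef. rewrite qpoch_inv_pow_gt by exact Hj. unfold Rdiv. ring. Qed.

Lemma is_series_phin (lam : R) (n : nat) : lam <> 0 ->
  is_series (fun j => newton_coef n j * newton_basis lam j) (phin lam n).
Proof.
  intros Hl.
  assert (Hf : is_series (fun j => newton_coef n j * newton_basis lam j)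
                 (sum_n (fun j => newton_coef n j * newton_basis lam j) n)).
  { apply is_series_finite_support. intros j Hj. rewrite newton_coef_gt by exact Hj. ring. }
  unfold phin, phi21. erewrite Series_ext; [rewrite (is_series_unique _ _ Hf); exact Hf|].
  intros j. rewrite qpoch_0_l. unfold newton_coef.
  pose proof (qpoch_Q_pos j).
  transitivity (qpoch (/ Q ^ n) Q j / qpoch Q Q j * (qpoch (t / lam) Q j * (- Q * lam) ^ j)).
  - field. lra.
  - rewrite qpoch_div_mul_pow by exact Hl. field. lra.
Qed.

Lemma phin_0 (lam : R) : lam <> 0 -> phin lam 0 = 1.
Proof.
  intros Hl. rewrite <- (is_series_unique _ _ (is_series_phin lam 0 Hl)).
  apply is_series_unique.
  replace 1 with (sum_n (fun j => newton_coef 0 j * newton_basis lam j) 0)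
    by (rewrite sum_O; unfold newton_coef; simpl; field).
  apply is_series_finite_support. intros j Hj. rewrite newton_coef_gt by exact Hj. ring.
Qed.

Lemma newton_coef_S_S (m j : nat) :
  newton_coef (S m) (S j) * (1 - Q ^ S j) = (1 - Q ^ S m) / Q ^ m * newton_coef m j.
Proof.
  assert (Q ^ m <> 0) by (apply pow_nonzero; lra).
  pose proof (qpoch_Q_pos j). pose proof (pow_S_lt_1 Q HQ j) as Hj; simpl in Hj.
  unfold newton_coef. rewrite qpoch_S_l.
  replace (/ Q ^ S m * Q) with (/ Q ^ m) by (simpl; field; lra).
  change (qpoch Q Q (S j)) with (qpoch Q Q j * (1 - Q * Q ^ j)).
  simpl pow. field. lra.
Qed.

Lemma newton_basis_mul_Q (lam : R) (i : nat) :
  newton_basis (lam * Q) (S i)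
  = Q ^ S i * newton_basis lam (S i) + t * Q ^ i * (Q ^ S i - 1) * newton_basis lam i.
Proof.
  induction i as [|i IH]; [simpl; ring|].
  change (newton_basis (lam * Q) (S (S i)))
    with (newton_basis (lam * Q) (S i) * (lam * Q - t * Q ^ S i)).
  rewrite IH. simpl. ring.
Qed.

(* Termwise the relation holds up to the telescoping remainder [h]. *)
Lemma phin_mul_Q (lam : R) (n : nat) : lam <> 0 ->
  phin (lam * Q) n = phin lam n - lam * lower Q (phin lam) n.
Proof.
  intros Hl. assert (HlQ : lam * Q <> 0) by (apply Rmult_integral_contrapositive; split; lra).
  destruct n as [|m]; [rewrite !phin_0 by assumption; simpl; ring|].
  set (g := (1 - Q ^ S m) / Q ^ m).
  set (h := fun j => newton_coef (S m) (S j) * (1 - Q ^ S j)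
                     * (newton_basis lam (S j) + t * Q ^ j * newton_basis lam j)).
  assert (Hmain : is_series (fun j => newton_coef (S m) j * newton_basis lam j
                                      - lam * g * (newton_coef m j * newton_basis lam j))
                    (phin lam (S m) - lam * g * phin lam m)).
  { apply (is_series_Rlin 1 (- (lam * g)) _ _ _ _ _ _
             (is_series_phin lam (S m) Hl) (is_series_phin lam m Hl)); intros; ring. }
  assert (Htel : is_series (fun j => h j - shift_right h j) 0).
  { apply (is_series_telescope h m). intros j Hj.
    unfold h. rewrite newton_coef_gt by lia. ring. }
  rewrite <- (is_series_unique _ _ (is_series_phin (lam * Q) (S m) HlQ)).
  apply is_series_unique. cbn [lower]. fold g.
  apply (is_series_Rlin 1 1 _ _ _ _ _ _ Hmain Htel); [|ring].
  intros [|i]; unfold h, shift_right.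
  - pose proof (newton_coef_S_S m 0) as K. fold g in K.
    rewrite K. unfold newton_coef. simpl. ring.
  - pose proof (newton_coef_S_S m (S i)) as K. fold g in K.
    rewrite newton_basis_mul_Q, K. simpl. ring.
Qed.

Lemma phin_neg1 (n : nat) : phin (-1) n = (- t) ^ n.
Proof.
  unfold phin, phi21. rewrite (Series_ext _ (chu_term n (- t))).
  - apply is_series_unique, is_series_chu_vandermonde.
  - intros j. unfold chu_term. rewrite qpoch_0_l, Rmult_1_r.
    replace (t / -1) with (- t) by field. replace (- Q * -1) with Q by ring. reflexivity.
Qed.

Lemma phin_t (n : nat) : t <> 0 -> phin t n = 1.
Proof.
  intros Ht. unfold phin, phi21. replace (t / t) with 1 by (field; exact Ht).
  apply is_series_unique.
  match goal with |- is_series ?f _ =>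
    assert (Hf : is_series f (sum_n f 0)) end.
  { apply is_series_finite_support. intros [|j] Hj; [lia|].
    rewrite (qpoch_S_l 1). unfold Rdiv. ring. }
  rewrite sum_O in Hf. simpl in Hf.
  match type of Hf with is_series _ ?v => replace v with 1 in Hf by field end.
  exact Hf.
Qed.

Lemma phin_lpoch (a b : R) (k n : nat) : a <> 0 -> (forall m, phin a m = (- b) ^ m) ->
  phin (a * Q ^ k) n = lpoch Q a b k n.
Proof.
  intros Ha Hb. revert n; induction k as [|k IH]; intros n.
  - rewrite Rmult_1_r. apply Hb.
  - assert (Hk : a * Q ^ k <> 0)
      by (apply Rmult_integral_contrapositive; split; [|apply pow_nonzero]; lra).
    replace (a * Q ^ S k) with (a * Q ^ k * Q) by (simpl; ring).
    rewrite phin_mul_Q, IH by exact Hk. cbn [lpoch].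
    rewrite (lower_ext Q _ _ n IH). reflexivity.
Qed.

End TerminatingSeries.

Section Pairing.

Variables Q u : R.
Hypothesis HQ : 0 < Q < 1.

Let HQ0 : Q <> 0. Proof. lra. Qed.

Definition wprod (X Y : nat -> R) (n : nat) : R := u ^ n * qexp_coef Q n * X n * Y n.

Lemma wprod_comm (X Y : nat -> R) (n : nat) : wprod X Y n = wprod Y X n.
Proof. unfold wprod; ring. Qed.

(* [lower] is adjoint, for the weight [u^n qexp_coef Q n], to [u] times the forward shift. *)
Lemma is_series_wprod_lower (X Y : nat -> R) (c v1 v2 l : R) :
  is_series (wprod X Y) v1 -> is_series (wprod (fun j => X (S j)) Y) v2 ->
  l = v1 - c * u * v2 ->
  is_series (wprod X (fun n => Y n - c * lower Q Y n)) l.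
Proof.
  intros H1 H2 ->.
  apply (is_series_Rlin 1 (- c) _ _ _ _ _ _ H1
           (is_series_shift_right _ _ (is_series_Rscal u _ _ H2))); [|ring].
  intros [|m]; unfold wprod, shift_right; simpl lower; [ring|].
  pose proof (pow_S_lt_1 Q HQ m) as Hm; simpl in Hm.
  assert (Q ^ m <> 0) by (apply pow_nonzero; exact HQ0).
  simpl. field. split; lra.
Qed.

Lemma is_series_wprod_lpoch_S (a b a' b' : R) (k l : nat) (v1 v2 v : R) :
  is_series (wprod (lpoch Q a b k) (lpoch Q a' b' l)) v1 ->
  is_series (wprod (lpoch Q a (b / Q) (pred k)) (lpoch Q a' b' l)) v2 ->
  v = v1 - a' * Q ^ l * u * (- b * v1 - a * (1 - Q ^ k) * v2) ->
  is_series (wprod (lpoch Q a b k) (lpoch Q a' b' (S l))) v.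
Proof.
  intros H1 H2 ->.
  apply (is_series_wprod_lower _ _ (a' * Q ^ l) v1 (- b * v1 - a * (1 - Q ^ k) * v2));
    [exact H1 | | reflexivity].
  apply (is_series_Rlin (- b) (- a * (1 - Q ^ k)) _ _
           (wprod (fun j => lpoch Q a b k (S j)) (lpoch Q a' b' l)) _ _ _ H1 H2); [|ring].
  intros n. unfold wprod. rewrite lpoch_S_n by exact HQ0. ring.
Qed.

Lemma is_series_wprod_geom (a b a' b' : R) (k : nat) (v : R) :
  v = qpoch (- (a * u * b')) Q k * qpoch_inf (- (u * b * b')) Q ->
  is_series (wprod (lpoch Q a b k) (lpoch Q a' b' 0)) v.
Proof.
  intros ->. induction k as [|k IH].
  - apply (is_series_Rext (fun n => qexp_coef Q n * (u * b * b') ^ n)).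
    + intros n. unfold wprod. simpl lpoch.
      replace (u * b * b') with (u * - b * - b') by ring. rewrite !Rpow_mult_distr. ring.
    + simpl qpoch. rewrite Rmult_1_l. apply is_series_euler; exact HQ.
  - apply (is_series_Rext _ _ _ (fun n => wprod_comm _ _ n)).
    set (v := qpoch (- (a * u * b')) Q k * qpoch_inf (- (u * b * b')) Q) in IH |- *.
    cbn [lpoch]. apply (is_series_wprod_lower _ _ (a * Q ^ k) v (- b' * v)).
    + apply (is_series_Rext _ _ _ (fun n => wprod_comm _ _ n)). exact IH.
    + apply (is_series_Rscal (- b')) in IH. revert IH. apply is_series_Rext.
      intros n. unfold wprod. simpl. ring.
    + simpl qpoch. unfold v. ring.
Qed.

(* [b / Q^m] rather than [b]: the recursion in [l] lowers [k] at the cost of dividing [b] by [Q]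
   (lemma [lpoch_S_n]). *)
Lemma is_series_wprod_same (a b : R) : a * u * b = - Q ->
  forall l k m, (l <= k)%nat ->
  is_series (wprod (lpoch Q a (b / Q ^ m) k) (lpoch Q a b l))
    (qpoch_inf (- (u * (b / Q ^ m) * b)) Q * qpoch Q Q k * qpoch (- (u * a ^ 2)) Q l).
Proof.
  intros Hab. assert (Ha : a <> 0) by (intros ->; lra). assert (Hb : b <> 0) by (intros ->; lra).
  assert (Hu : u = - Q / (a * b)) by (rewrite <- Hab; field; lra).
  intros l; induction l as [|l IH]; intros k m Hlk.
  - apply is_series_wprod_geom. simpl qpoch. replace (- (a * u * b)) with Q by lra. ring.
  - destruct k as [|k]; [lia|].
    assert (Hm : Q ^ m <> 0) by (apply pow_nonzero; exact HQ0).
    pose proof (IH k (S m) ltac:(lia)) as H2.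
    replace (b / Q ^ S m) with (b / Q ^ m / Q) in H2 by (simpl; field; lra).
    apply (is_series_wprod_lpoch_S _ _ _ _ _ _ _ _ _ (IH (S k) m ltac:(lia)) H2).
    replace (- (u * (b / Q ^ m / Q) * b)) with (- (u * (b / Q ^ m) * b) / Q) by (field; lra).
    rewrite qpoch_inf_div_Q by exact HQ.
    simpl qpoch. simpl pow. rewrite Hu. field. repeat split; lra.
Qed.

Lemma is_series_wprod_cross (a b a' b' : R) : u * b * b' = - Q ->
  forall l k m,
  is_series (wprod (lpoch Q a (b / Q ^ m) k) (lpoch Q a' b' l))
    (qpoch_inf (Q / Q ^ m) Q * qpoch (- (a * u * b')) Q k * qpoch (- (a' * u * b)) Q l).
Proof.
  intros Hbb l; induction l as [|l IH]; intros k m;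
    assert (Hm : Q ^ m <> 0) by (apply pow_nonzero; exact HQ0).
  - apply is_series_wprod_geom. simpl qpoch.
    replace (- (u * (b / Q ^ m) * b')) with (- (u * b * b') / Q ^ m) by (field; exact Hm).
    rewrite Hbb, Ropp_involutive. ring.
  - pose proof (IH (pred k) (S m)) as H2.
    replace (b / Q ^ S m) with (b / Q ^ m / Q) in H2 by (simpl; field; lra).
    apply (is_series_wprod_lpoch_S _ _ _ _ _ _ _ _ _ (IH k m) H2).
    (* [Q / Q^(m+1) = / Q^m], so the [v2] term vanishes, and for [m > 0] everything does *)
    replace (Q / Q ^ S m) with (/ Q ^ m) by (simpl; field; lra).
    rewrite qpoch_inf_inv_pow by exact HQ.
    destruct m as [|m].
    + simpl qpoch. simpl pow. field.
    + replace (Q / Q ^ S m) with (/ Q ^ m) by (simpl; field; split; [apply pow_nonzero|]; lra).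
      rewrite qpoch_inf_inv_pow by exact HQ. ring.
Qed.

End Pairing.

Section SpectralPairings.

Variables Q t : R.
Hypothesis HQ : 0 < Q < 1.
Hypothesis Ht : 0 < t.

Lemma phin_neg_pow (k n : nat) : phin Q t (- Q ^ k) n = lpoch Q (-1) t k n.
Proof.
  replace (- Q ^ k) with (-1 * Q ^ k) by ring.
  apply phin_lpoch; [exact HQ | lra | intros m; apply phin_neg1; exact HQ].
Qed.

Lemma phin_t_pow (k n : nat) : phin Q t (t * Q ^ k) n = lpoch Q t (-1) k n.
Proof.
  apply phin_lpoch; [exact HQ | lra |].
  intros m. rewrite phin_t by lra. replace (- -1) with 1 by ring. now rewrite pow1.
Qed.

Lemma is_series_wprod_neg_neg (k l : nat) : (l <= k)%nat ->
  is_series (wprod Q (Q / t) (phin Q t (- Q ^ k)) (phin Q t (- Q ^ l)))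
    (qpoch_inf (- (Q * t)) Q * qpoch Q Q k * qpoch (- (Q / t)) Q l).
Proof.
  intros Hlk.
  assert (H := is_series_wprod_same Q (Q / t) HQ (-1) t ltac:(field; lra) l k 0 Hlk).
  replace (t / Q ^ 0) with t in H by (simpl; field).
  replace (- (Q * t)) with (- (Q / t * t * t)) by (field; lra).
  replace (- (Q / t)) with (- (Q / t * (-1) ^ 2)) by ring.
  revert H. apply is_series_Rext. intros n. unfold wprod. rewrite !phin_neg_pow. reflexivity.
Qed.

Lemma is_series_wprod_pos_pos (k l : nat) : (l <= k)%nat ->
  is_series (wprod Q (Q / t) (phin Q t (t * Q ^ k)) (phin Q t (t * Q ^ l)))
    (qpoch_inf (- (Q / t)) Q * qpoch Q Q k * qpoch (- (Q * t)) Q l).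
Proof.
  intros Hlk.
  assert (H := is_series_wprod_same Q (Q / t) HQ t (-1) ltac:(field; lra) l k 0 Hlk).
  replace (-1 / Q ^ 0) with (-1) in H by (simpl; field).
  replace (- (Q / t)) with (- (Q / t * -1 * -1)) by ring.
  replace (- (Q * t)) with (- (Q / t * t ^ 2)) by (field; lra).
  revert H. apply is_series_Rext. intros n. unfold wprod. rewrite !phin_t_pow. reflexivity.
Qed.

Lemma is_series_wprod_neg_pos (k l : nat) :
  is_series (wprod Q (Q / t) (phin Q t (- Q ^ k)) (phin Q t (t * Q ^ l)))
    (qpoch_inf Q Q * qpoch (- (Q / t)) Q k * qpoch (- (Q * t)) Q l).
Proof.
  assert (H := is_series_wprod_cross Q (Q / t) HQ (-1) t t (-1) ltac:(field; lra) l k 0).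
  replace (t / Q ^ 0) with t in H by (simpl; field).
  replace (Q / Q ^ 0) with Q in H by (simpl; field).
  replace (- (Q / t)) with (- (-1 * (Q / t) * -1)) by ring.
  replace (- (Q * t)) with (- (t * (Q / t) * t)) by (field; lra).
  revert H. apply is_series_Rext. intros n. unfold wprod.
  rewrite phin_neg_pow, phin_t_pow. reflexivity.
Qed.

End SpectralPairings.

Lemma Cmod_phase (n : nat) (phi : R) :
  Cmod (Cpow Ci n * (cos (INR n * phi), sin (INR n * phi))) = 1.
Proof.
  rewrite Cmod_mult, Cmod_pow, Cmod_Ci, pow1, Rmult_1_l.
  unfold Cmod; simpl fst; simpl snd.
  rewrite <- sqrt_1. f_equal. rewrite <- (sin2_cos2 (INR n * phi)). unfold Rsqr. ring.
Qed.

Lemma is_series_RtoC (a : nat -> R) (l : R) :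
  is_series a l -> is_series (fun n => RtoC (a n)) (RtoC l).
Proof.
  intros H. apply filterlim_locally. intros eps.
  apply (filterlim_locally (sum_n a) l) with (eps := eps) in H.
  revert H. apply filter_imp. intros n Hn.
  assert (Hsum : forall N, sum_n (fun k => RtoC (a k)) N = RtoC (sum_n a N)).
  { induction N as [|N IH]; [rewrite !sum_O; reflexivity|].
    rewrite !sum_Sn, IH. unfold plus; simpl. rewrite RtoC_plus. reflexivity. }
  rewrite Hsum. split; [exact Hn | apply ball_center].
Qed.

Lemma qexp_coef_sq (q : R) (n : nat) : 0 < q < 1 ->
  qexp_coef (q ^ 2) n = q ^ (n * (n - 1)) / qpoch (q ^ 2) (q ^ 2) n.
Proof.
  intros Hq. assert (HQ : 0 < q ^ 2 < 1) by (split; [apply pow_lt|simpl]; nra).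
  induction n as [|n IH]; [simpl; field|].
  pose proof (qpoch_Q_pos (q ^ 2) HQ n). pose proof (pow_S_lt_1 (q ^ 2) HQ n) as Hn.
  cbn [qexp_coef qpoch]. rewrite IH.
  replace (S n * (S n - 1))%nat with (n * (n - 1) + 2 * n)%nat by (destruct n; simpl; lia).
  rewrite pow_add, (pow_mult q 2 n). change ((q ^ 2) ^ S n) with (q ^ 2 * (q ^ 2) ^ n) in *.
  field. lra.
Qed.

Lemma pn_mul_pn (q tau lam mu : R) (n : nat) : 0 < q < 1 ->
  q ^ (2 * n) * pn q tau lam n * pn q tau mu n
  = wprod (q ^ 2) (q ^ 2 / Rpower q (2 * tau))
      (phin (q ^ 2) (Rpower q (2 * tau)) lam) (phin (q ^ 2) (Rpower q (2 * tau)) mu) n.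
Proof.
  intros Hq.
  assert (Hc : 0 < qpoch (q ^ 2) (q ^ 2) n)
    by (apply qpoch_Q_pos; split; [apply pow_lt|simpl]; nra).
  assert (Hs : 0 < sqrt (qpoch (q ^ 2) (q ^ 2) n)) by (apply sqrt_lt_R0; exact Hc).
  assert (Ht : 0 < Rpower q (2 * tau)) by apply exp_pos.
  assert (Htau : Rpower q (- INR n * tau) * Rpower q (- INR n * tau)
                 = / Rpower q (2 * tau) ^ n).
  { rewrite <- Rpower_plus.
    replace (- INR n * tau + - INR n * tau) with (- (2 * tau * INR n)) by ring.
    rewrite Rpower_Ropp, <- Rpower_mult, Rpower_pow by exact Ht. reflexivity. }
  unfold pn, wprod, phin. rewrite qexp_coef_sq, !(pow_mult q 2 n) by exact Hq.
  set (t := Rpower q (2 * tau)) in *. clearbody t.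
  assert (Hgauss : Rpower q (INR n * (INR n - 1) / 2) * Rpower q (INR n * (INR n - 1) / 2)
                   = q ^ (n * (n - 1))).
  { assert (E : INR (n * (n - 1)) = INR n * (INR n - 1)).
    { destruct n as [|m]; [simpl; ring|].
      rewrite mult_INR, minus_INR by lia. reflexivity. }
    rewrite <- Rpower_plus, <- Rpower_pow, E by lra. f_equal. field. }
  assert (t ^ n <> 0) by (apply pow_nonzero; lra).
  replace ((q ^ 2 / t) ^ n) with ((q ^ 2) ^ n * / t ^ n)
    by (unfold Rdiv; rewrite Rpow_mult_distr, pow_inv; reflexivity).
  rewrite <- Htau, <- Hgauss.
  rewrite <- (sqrt_sqrt (qpoch (q ^ 2) (q ^ 2) n)) at 3 by lra.
  field. lra.
Qed.

Lemma Cmult_unit_conj (z : C) (a p1 p2 : R) : Cmod z = 1 ->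
  (RtoC a * (z * RtoC p1) * Cconj (z * RtoC p2))%C = RtoC (a * p1 * p2).
Proof.
  intros Hz. rewrite Cmult_conj.
  replace (Cconj (RtoC p2)) with (RtoC p2) by (unfold Cconj, RtoC; simpl; f_equal; ring).
  transitivity (RtoC a * RtoC p1 * RtoC p2 * (z * Cconj z))%C; [ring|].
  rewrite <- Cmod2_conj, Hz, pow1, !RtoC_mult. ring.
Qed.

Lemma inner_is_Dop_vvec (q tau phi lam mu V : R) : 0 < q < 1 ->
  is_series (wprod (q ^ 2) (q ^ 2 / Rpower q (2 * tau))
               (phin (q ^ 2) (Rpower q (2 * tau)) lam) (phin (q ^ 2) (Rpower q (2 * tau)) mu)) V ->
  inner_is (Dop q (vvec q tau phi lam)) (vvec q tau phi mu) (RtoC V).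
Proof.
  intros Hq H.
  apply (is_series_Rext _ (fun n => q ^ (2 * n) * pn q tau lam n * pn q tau mu n)) in H;
    [|intros n; symmetry; apply pn_mul_pn; exact Hq].
  apply is_series_RtoC in H. revert H. apply is_series_ext. intros n.
  unfold Dop, vvec. symmetry. apply Cmult_unit_conj, Cmod_phase.
Qed.

Lemma Rpower_2 (q : R) : 0 < q -> Rpower q 2 = q ^ 2.
Proof. intros Hq. rewrite <- Rpower_pow by exact Hq. f_equal. Qed.

Theorem lemma5p5 (q tau phi : R) (hq0 : 0 < q) (hq1 : q < 1)
  (hphi0 : 0 <= phi) (hphi1 : phi < 2 * PI) :
  (forall k l : nat, (l <= k)%nat ->
     inner_is (Dop q (vvec q tau phi (- q ^ (2 * k))))
              (vvec q tau phi (- q ^ (2 * l)))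
              (RtoC (qpoch_inf (- Rpower q (2 * tau + 2)) (q ^ 2)
                     * qpoch (q ^ 2) (q ^ 2) k
                     * qpoch (- Rpower q (2 - 2 * tau)) (q ^ 2) l))) /\
  (forall k l : nat, (l <= k)%nat ->
     inner_is (Dop q (vvec q tau phi (Rpower q (2 * tau + 2 * INR k))))
              (vvec q tau phi (Rpower q (2 * tau + 2 * INR l)))
              (RtoC (qpoch_inf (- Rpower q (2 - 2 * tau)) (q ^ 2)
                     * qpoch (q ^ 2) (q ^ 2) k
                     * qpoch (- Rpower q (2 + 2 * tau)) (q ^ 2) l))) /\
  (forall k l : nat,
     inner_is (Dop q (vvec q tau phi (- q ^ (2 * k))))
              (vvec q tau phi (Rpower q (2 * tau + 2 * INR l)))
              (RtoC (qpoch_inf (q ^ 2) (q ^ 2)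
                     * qpoch (- Rpower q (2 - 2 * tau)) (q ^ 2) k
                     * qpoch (- Rpower q (2 + 2 * tau)) (q ^ 2) l))).
Proof.
  assert (Hq : 0 < q < 1) by lra.
  assert (HQ : 0 < q ^ 2 < 1) by (split; [apply pow_lt | simpl]; nra).
  assert (Ht : 0 < Rpower q (2 * tau)) by apply exp_pos.
  assert (Hneg : forall k, - q ^ (2 * k) = - (q ^ 2) ^ k) by (intros; rewrite pow_mult; ring).
  assert (Hpos : forall k, Rpower q (2 * tau + 2 * INR k) = Rpower q (2 * tau) * (q ^ 2) ^ k).
  { intros k. rewrite Rpower_plus, <- (Rpower_mult q 2 (INR k)), Rpower_2, Rpower_pow by lra.
    reflexivity. }
  assert (E1 : Rpower q (2 * tau + 2) = q ^ 2 * Rpower q (2 * tau))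
    by (rewrite Rpower_plus, Rpower_2 by lra; ring).
  assert (E2 : Rpower q (2 - 2 * tau) = q ^ 2 / Rpower q (2 * tau))
    by (unfold Rminus; rewrite Rpower_plus, Rpower_Ropp, Rpower_2 by lra; reflexivity).
  assert (E3 : Rpower q (2 + 2 * tau) = q ^ 2 * Rpower q (2 * tau))
    by (rewrite Rpower_plus, Rpower_2 by lra; reflexivity).
  rewrite E1, E2, E3.
  split; [|split]; intros k l; [intros Hlk..|];
    rewrite ?Hneg, ?Hpos; apply inner_is_Dop_vvec; try exact Hq.
  - apply is_series_wprod_neg_neg; assumption.
  - apply is_series_wprod_pos_pos; assumption.
  - apply is_series_wprod_neg_pos; assumption.
Qed.
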